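(* Let $V$ be a Majorana representation with identity $\mathbb 1$ satisfying axiom M2'. Suppose that for every idempotent $x\in V$ the space $V_0^{(x)}$ contains finitely many idempotents and $d(x)\le 2$, where $d(x)=\dim V_0^{(x)}$. Then every associative subalgebra of $V$ has dimension at most $3$.
   Context: A transposition group $(G,T)$ is a finite group $G$ with a $G$-stable set $T$ of involutions generating $G$. A Majorana representation of $(G,T)$ is a quintuple $(G,T,V,\varphi,\psi)$ where $V$ is a commutative non-associative real algebra with a (positive definite) inner product $(\,,)$, $\varphi:G\to GL(V)$ is a representation with $\varphi(G)\le \mathrm{Aut}(V)$, and $\psi:T\to V\setminus\{0\}$ is injective with $\psi(t^g)=\psi(t)^{\varphi(g)}$, such that: (M1) $(u,v\cdot w)=(u\cdot v,w)$ for all $u,v,w$; (M2) $(u\cdot u,v\cdot v)\ge (u\cdot v,u\cdot v)$ for all $u,v$; (M3) elements of $\psi(T)$ (Majorana axes) are idempotents of length $1$; (M4) each Majorana axis $a$ has $\mathrm{ad}_a:u\mapsto a\cdot u$ diagonalizable with eigenvalues in $\{0,1,\frac1{4},\frac1{32}\}$; (M5) $1$ is a simple eigenvalue of each Majorana axis; (M6) for each axis $a$ the linear map $\tau(a)$ acting as $(-1)^{32\mu}$ on the $\mu$-eigenspace of $\mathrm{ad}_a$ is an algebra automorphism; (M7) for each axis $a$ the map $\sigma(a)$ on $C_V(\tau(a))$ acting as $(-1)^{4\mu}$ on the $\mu$-eigenspaces, $\mu\ne\frac1{32}$, preserves the product of $C_V(\tau(a))$; (M8) $\tau(\psi(t))=\varphi(t)$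 for all $t\in T$. Axiom M2': the Norton inequality holds for all $u,v$, with equality precisely when $\mathrm{ad}_u$ and $\mathrm{ad}_v$ commute. $V_0^{(x)}$ is the $0$-eigenspace of $\mathrm{ad}_x:u\mapsto x\cdot u$. *)

From HB Require Import structures.
From mathcomp Require Import all_boot all_order all_algebra all_fingroup.
From mathcomp Require Import reals.
Set Implicit Arguments. Unset Strict Implicit. Unset Printing Implicit Defensive.
Import GRing.Theory Num.Theory.

Local Open Scope ring_scope.

Section Majorana.
Variable R : realType.
Variable V : vectType R.

Definition lin_map (f : V -> V) : Prop :=
  forall (a : R) (u v : V), f (a *: u + v) = a *: f u + f v.

Record comm_algebra (mult : V -> V -> V) : Prop := {
  mult_comm : forall u v, mult u v = mult v u;
  mult_linl : forall w, lin_map (fun u => mult u w) }.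

Record pos_inner_product (ip : V -> V -> R) : Prop := {
  ip_sym : forall u v, ip u v = ip v u;
  ip_linl : forall (w : V) (a : R) (u v : V), ip (a *: u + v) w = a * ip u w + ip v w;
  ip_pos : forall v, v != 0 -> 0 < ip v v }.

Definition idempotent_el (mult : V -> V -> V) (x : V) : Prop := mult x x = x.

Definition eigvec (mult : V -> V -> V) (a : V) (mu : R) (v : V) : Prop :=
  mult a v = mu *: v.

Definition algebra_aut (mult : V -> V -> V) (f : V -> V) : Prop :=
  [/\ lin_map f, bijective f & forall u v, f (mult u v) = mult (f u) (f v)].

Definition majorana_eigs : seq R := [:: 0; 1; 4^-1; 32^-1].

(* (-1)^(32 mu) for mu in {0,1,1/4,1/32} *)
Definition tau_sign (mu : R) : R := if mu == 32^-1 then -1 else 1.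
(* (-1)^(4 mu) for mu in {0,1,1/4} *)
Definition sigma_sign (mu : R) : R := if mu == 4^-1 then -1 else 1.

Definition tau_spec (mult : V -> V -> V) (a : V) (f : V -> V) : Prop :=
  lin_map f /\ forall mu v, mu \in majorana_eigs -> eigvec mult a mu v ->
    f v = tau_sign mu *: v.

Definition in_CV_tau (mult : V -> V -> V) (a u : V) : Prop :=
  forall f, tau_spec mult a f -> f u = u.

(* f restricted to C_V(tau(a)) is the map sigma(a) *)
Definition sigma_spec (mult : V -> V -> V) (a : V) (f : V -> V) : Prop :=
  lin_map f /\ forall mu v, mu \in [:: 0; 1; 4^-1] -> eigvec mult a mu v ->
    f v = sigma_sign mu *: v.

Record majorana_axis (mult : V -> V -> V) (ip : V -> V -> R) (a : V) : Prop := {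
  M3_idem : mult a a = a;
  M3_len : ip a a = 1;
  M4 : forall v, exists v0 v1 v2 v3,
        v = v0 + v1 + v2 + v3 /\
        [/\ eigvec mult a 0 v0, eigvec mult a 1 v1,
            eigvec mult a 4^-1 v2 & eigvec mult a 32^-1 v3];
  M5 : forall v, eigvec mult a 1 v -> exists c : R, v = c *: a;
  M6 : forall f, tau_spec mult a f -> algebra_aut mult f;
  M7 : forall f, sigma_spec mult a f -> forall u v,
        in_CV_tau mult a u -> in_CV_tau mult a v ->
        f (mult u v) = mult (f u) (f v) }.

Variable gT : finGroupType.

(* (G,T,V,phi,psi) is a Majorana representation; group elements act on the
   right: v^{phi(g)} = phi g v, so phi (g*h) = phi h \o phi g, and
   t^g = g^-1 t g. *)
Record majorana_rep (G : {group gT}) (T : {set gT}) (mult : V -> V -> V)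
    (ip : V -> V -> R) (phi : gT -> V -> V) (psi : gT -> V) : Prop := {
  T_sub : T \subset G;
  T_invol : forall t, t \in T -> #[t]%g = 2%N;
  T_stable : forall t g, t \in T -> g \in G -> (t ^ g)%g \in T;
  T_gen : (<<T>>)%g = G :> {set gT};
  V_alg : comm_algebra mult;
  V_ip : pos_inner_product ip;
  phi_lin : forall g, g \in G -> lin_map (phi g);
  phi_bij : forall g, g \in G -> bijective (phi g);
  phi_hom : forall g h, g \in G -> h \in G -> phi (g * h)%g =1 phi h \o phi g;
  phi_aut : forall g, g \in G -> algebra_aut mult (phi g);
  psi_inj : {in T &, injective psi};
  psi_nz : forall t, t \in T -> psi t != 0;
  psi_equiv : forall t g, t \in T -> g \in G -> psi (t ^ g)%g = phi g (psi t);
  axM1 : forall u v w, ip u (mult v w) = ip (mult u v) w;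
  axM2 : forall u v, ip (mult u v) (mult u v) <= ip (mult u u) (mult v v);
  axes : forall t, t \in T -> majorana_axis mult ip (psi t);
  axM8 : forall t, t \in T -> tau_spec mult (psi t) (phi t) }.

Definition axiom_M2' (mult : V -> V -> V) (ip : V -> V -> R) : Prop :=
  forall u v,
    ip (mult u v) (mult u v) <= ip (mult u u) (mult v v) /\
    (ip (mult u v) (mult u v) = ip (mult u u) (mult v v) <->
       forall w, mult u (mult v w) = mult v (mult u w)).

Definition V0 (mult : V -> V -> V) (x : V) : {vspace V} :=
  lker (linfun (mult x)).

Definition is_subalgebra (mult : V -> V -> V) (W : {vspace V}) : Prop :=
  forall u v, u \in W -> v \in W -> mult u v \in W.

Definition is_associative_on (mult : V -> V -> V) (W : {vspace V}) : Prop :=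
  forall u v w, u \in W -> v \in W -> w \in W ->
    mult (mult u v) w = mult u (mult v w).

End Majorana.

(* Adjoining the identity to an associative subalgebra W gives a commutative
   associative algebra A that is formally real: u^2 + v^2 = 0 forces u = 0, since
   M1 gives (u, u) = (u^2, 1).  In such an algebra an idempotent e with
   eA <> R e splits into two nonzero orthogonal idempotents.  Indeed, take
   w in eA \ R e and a nonzero polynomial p of least degree with p(w) = 0;
   formal reality rules out a factor (X - a)^2 + b^2 with b <> 0, so
   p = (X - a) d, and d(w) is a nonzero multiple of an idempotent f <> e.
   Refining {1} in this way, dim A >= 4 yields orthogonal idempotents
   x, y1, y2, y3 summing to 1; the y_i are independent and lie in V_0^(x),
   contradicting d(x) <= 2. *)

From HB Require Import structures.
From mathcomp Require Import all_boot all_order all_algebra all_fingroup.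
From mathcomp Require Import reals complex ring lra.
From Stdlib Require Import Classical.
Set Implicit Arguments. Unset Strict Implicit. Unset Printing Implicit Defensive.
Import Order.TTheory GRing.Theory Num.Theory.
Local Open Scope ring_scope.

Lemma size_mul_gt (R : idomainType) (d q : {poly R}) :
  d != 0 -> (1 < size q)%N -> (size d < size (d * q)%R)%N.
Proof.
move=> dn0 sq; have qn0 : q != 0 by rewrite -size_poly_eq0 -lt0n (ltn_trans _ sq).
by rewrite size_mul //; case: (size q) sq => [|[|k]] // _; rewrite !addnS /= ltnS leq_addr.
Qed.

Section RealPoly.
Variable R : realType.

Lemma size_sqr_XsubC_addC (a c : R) : size (('X - a%:P) ^+ 2 + c%:P) = 3%N.
Proof. by rewrite size_polyDl size_exp_XsubC // size_polyC; case: (_ != 0). Qed.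

Lemma nonreal_root_size_le2 (r : {poly R}) (a b : R) :
  b != 0 -> (size r <= 2)%N ->
  root (map_poly (real_complex R) r) (a +i* b)%C -> r = 0.
Proof.
move=> bn0 sr; have rE : r = r`_1 *: 'X + (r`_0)%:P.
  apply/polyP => -[|[|i]]; rewrite coefD coefZ coefX coefC /= ?mulr0 ?mulr1 ?add0r ?addr0 //.
  by rewrite nth_default // (leq_trans sr).
rewrite rE rmorphD /= map_polyZ map_polyX map_polyC /= /root !hornerE => /eqP H.
have /eqP := congr1 (@complex.Im R) H; rewrite /= mul0r !addr0 mulf_eq0.
rewrite (negPf bn0) orbF => /eqP r1.
move: H; rewrite r1 => /(congr1 (@complex.Re R)) /=.
by rewrite !mul0r subrr !add0r => ->; rewrite scale0r add0r.
Qed.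

Lemma real_root_or_quadratic_factor (p : {poly R}) : size p != 1%N ->
  (exists a, root p a) \/
  exists a b, b != 0 /\ ('X - a%:P) ^+ 2 + (b ^+ 2)%:P %| p.
Proof.
move=> sp; have /closed_rootP[[a b] pz] : size (map_poly (real_complex R) p) != 1%N.
  by rewrite size_map_poly.
have [b0|bn0] := eqVneq b 0.
  left; exists a; move: pz; rewrite b0 /root.
  rewrite (_ : (a +i* 0)%C = real_complex R a) // horner_map /=.
  by rewrite (inj_eq (@complexI R)).
right; exists a, b; split=> //.
pose q : {poly R} := ('X - a%:P) ^+ 2 + (b ^+ 2)%:P.
have sq : size q = 3%N by exact: size_sqr_XsubC_addC.
have qn0 : q != 0 by rewrite -size_poly_eq0 sq.
have qz : (map_poly (real_complex R) q).[(a +i* b)%C] = 0.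
  rewrite rmorphD rmorphXn rmorphB /= map_polyX !map_polyC /= !hornerE.
  by apply/eqP; rewrite eq_complex /=; apply/andP; split; apply/eqP; ring.
apply/modp_eq0P; apply: (nonreal_root_size_le2 (a := a) bn0).
  by rewrite -ltnS -sq ltn_modp.
move: pz; rewrite /root {1}(divp_eq p q) rmorphD rmorphM /= hornerD hornerM.
by rewrite qz mulr0 add0r.
Qed.

End RealPoly.

Section CommAlgebra.
Variables (R : realType) (V : vectType R) (mult : V -> V -> V).
Hypothesis Halg : comm_algebra mult.

Lemma multC u v : mult u v = mult v u.
Proof. exact: (mult_comm Halg). Qed.

Lemma multDl u v w : mult (u + v) w = mult u w + mult v w.
Proof. by have := mult_linl Halg w 1 u v; rewrite !scale1r. Qed.

Lemma mult0l w : mult 0 w = 0.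
Proof. by apply/(addrI (mult 0 w)); rewrite -multDl !addr0. Qed.

Lemma mult0r w : mult w 0 = 0.
Proof. by rewrite multC mult0l. Qed.

Lemma multZl a u w : mult (a *: u) w = a *: mult u w.
Proof. by have := mult_linl Halg w a u 0; rewrite !addr0 mult0l addr0. Qed.

Lemma multDr u v w : mult w (u + v) = mult w u + mult w v.
Proof. by rewrite !(multC w) multDl. Qed.

Lemma multZr a u w : mult w (a *: u) = a *: mult w u.
Proof. by rewrite !(multC w) multZl. Qed.

Lemma multBl u v w : mult (u - v) w = mult u w - mult v w.
Proof. by rewrite -scaleN1r -[in RHS]scaleN1r multDl multZl. Qed.

Lemma multBr u v w : mult w (u - v) = mult w u - mult w v.
Proof. by rewrite !(multC w) multBl. Qed.

Lemma mult_suml (s : seq V) w : mult (\sum_(x <- s) x) w = \sum_(x <- s) mult x w.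
Proof.
by elim: s => [|x s IH]; rewrite ?big_nil ?mult0l // !big_cons multDl IH.
Qed.

Lemma memV0 x y : (y \in V0 mult x) = (mult x y == 0).
Proof.
have multx_linear : linear (mult x) by move=> a u v; rewrite multDr multZr.
pose multx : {linear V -> V} :=
  HB.pack (mult x) (GRing.isLinear.Build R V V *:%R (mult x) multx_linear).
by rewrite memv_ker (lfunE multx).
Qed.

Lemma span_sub_V0 x (s : seq V) :
  all (fun y => mult x y == 0) s -> (<<s>> <= V0 mult x)%VS.
Proof. by move/allP=> s0; apply/span_subvP => y /s0; rewrite memV0. Qed.

Definition orth_idempotents (s : seq V) :=
  all (fun x => (mult x x == x) && (x != 0)) s &&
  pairwise (fun x y => mult x y == 0) s.

Lemma orth_idempotents_free s : orth_idempotents s -> free s.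
Proof.
elim: s => [|x s IH]; first by rewrite nil_free.
rewrite /orth_idempotents /=.
case/andP=> /andP[/andP[/eqP xx xn0] s_idem] /andP[xs s_orth].
rewrite free_cons IH ?s_idem ?andbT; last exact/andP.
apply: contra xn0 => /(subvP (span_sub_V0 xs)); by rewrite memV0 xx.
Qed.

Lemma orth_idempotents_dim_V0 x t :
  orth_idempotents (x :: t) -> (size t <= \dim (V0 mult x))%N.
Proof.
case/andP=> /andP[_ t_idem] /andP[xt t_orth].
have /eqP <- := orth_idempotents_free (introT andP (conj t_idem t_orth)).
exact/dimvS/span_sub_V0.
Qed.

Definition formally_real := forall u v, mult u u + mult v v = 0 -> u = 0.

Lemma formally_real_sq_eq0 u : formally_real -> mult u u = 0 -> u = 0.
Proof. by move=> Hreal uu; apply: (Hreal u 0); rewrite uu mult0l addr0. Qed.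

End CommAlgebra.

Lemma ex_min_measure (T : Type) (m : T -> nat) (P : T -> Prop) :
  (exists x, P x) -> exists x, P x /\ forall y, (m y < m x)%N -> ~ P y.
Proof.
move=> [x Px]; have [n mx] : exists n, (m x < n)%N by exists (m x).+1.
elim: n x Px mx => // n IH x Px mx.
case: (classic (exists y, (m y < m x)%N /\ P y)) => [[y [yx Py]]|noy].
  by apply: (IH y) => //; rewrite -ltnS (leq_trans _ mx).
by exists x; split=> // y yx Py; apply: noy; exists y.
Qed.

Lemma all_rem_pairwise (T : eqType) (r : rel T) (s : seq T) x :
  symmetric r -> x \in s -> pairwise r s -> all (r x) (rem x s).
Proof.
move=> r_sym; elim: s => //= y s IH; rewrite inE => xys /andP[ys rs].
have [<-|yx] := eqVneq y x; first exact: ys.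
have xs : x \in s by move: xys; rewrite eq_sym (negPf yx).
by rewrite /= r_sym (allP ys x xs) IH.
Qed.

Section AssociativeSubalgebra.
Variables (R : realType) (V : vectType R) (mult : V -> V -> V) (A : {vspace V}).
Hypotheses (Halg : comm_algebra mult) (Asub : is_subalgebra mult A)
  (Aassoc : is_associative_on mult A).

Section PolyEval.
Variables e w : V.
Hypotheses (eA : e \in A) (ee : mult e e = e) (wA : w \in A) (ew : mult e w = w).

(* Horner evaluation of [p] at [w], the idempotent [e] playing the role of 1. *)
Definition peval (p : {poly R}) : V :=
  foldr (fun c v => c *: e + mult w v) 0 p.

Lemma peval0 : peval 0 = 0.
Proof. by rewrite /peval polyseq0. Qed.

Lemma peval_cons q c : peval (q * 'X + c%:P) = c *: e + mult w (peval q).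
Proof.
rewrite -cons_poly_def /peval polyseq_cons.
case: nilP => [q0|_] //; rewrite q0 /= (mult0r Halg) addr0 polyseqC.
by case: eqP => [->|] /=; rewrite ?scale0r // (mult0r Halg) addr0.
Qed.

Lemma pevalC c : peval c%:P = c *: e.
Proof. by have := peval_cons 0 c; rewrite mul0r add0r peval0 (mult0r Halg) addr0. Qed.

Lemma pevalX : peval 'X = w.
Proof.
by have := peval_cons 1 0; rewrite mul1r addr0 scale0r add0r -polyC1 pevalC scale1r
  (multC Halg) ew.
Qed.

Lemma peval_mem p : peval p \in A /\ mult e (peval p) = peval p.
Proof.
elim/poly_ind: p => [|q c [qA eq]]; first by rewrite peval0 mem0v (mult0r Halg).
rewrite peval_cons (multDr Halg) (multZr Halg) ee -Aassoc // ew.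
by split=> //; rewrite memvD ?memvZ ?Asub.
Qed.

Lemma peval_linear a p q : peval (a *: p + q) = a *: peval p + peval q.
Proof.
elim/poly_ind: p q => [|p c IH] q; first by rewrite scaler0 add0r peval0 scaler0 add0r.
have [q' [d ->]] : exists q' d, q = q' * 'X + d%:P.
  by elim/poly_ind: q => [|q' d _]; [exists 0, 0; rewrite mul0r add0r | exists q', d].
have -> : a *: (p * 'X + c%:P) + (q' * 'X + d%:P) = (a *: p + q') * 'X + (a * c + d)%:P.
  by rewrite -!mul_polyC polyCD polyCM; ring.
rewrite !peval_cons IH (multDr Halg) (multZr Halg) scalerDr scalerDl scalerA.
by rewrite -!addrA; congr (_ + _); rewrite addrCA.
Qed.

Lemma pevalD p q : peval (p + q) = peval p + peval q.
Proof. by have := peval_linear 1 p q; rewrite !scale1r. Qed.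

Lemma pevalZ a p : peval (a *: p) = a *: peval p.
Proof. by have := peval_linear a p 0; rewrite !addr0 peval0 addr0. Qed.

Lemma pevalB p q : peval (p - q) = peval p - peval q.
Proof. by rewrite -scaleN1r -[in RHS]scaleN1r pevalD pevalZ. Qed.

Lemma pevalM p q : peval (p * q) = mult (peval p) (peval q).
Proof.
have [pA pe] := peval_mem p.
elim/poly_ind: q => [|q c IH]; first by rewrite mulr0 peval0 (mult0r Halg).
have [qA _] := peval_mem q.
rewrite mulrDr mulrA (mulrC p c%:P) mul_polyC pevalD pevalZ.
have := peval_cons (p * q) 0; rewrite addr0 scale0r add0r => ->.
rewrite IH peval_cons (multDr Halg) (multZr Halg) (multC Halg _ e) pe addrC.
by rewrite -Aassoc // (multC Halg w (peval p)) Aassoc.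
Qed.

Lemma peval_annihilator : exists p, p != 0 /\ peval p = 0.
Proof.
pose n := \dim (fullv : {vspace V}).
pose X := [tuple peval 'X^i | i < n.+1].
have Xnfree : ~~ free X.
  apply/negP => /eqP dimX; have := dimvS (subvf <<X>>%VS).
  by rewrite dimX size_tuple ltnn.
have [k Xk [i ki]] : exists2 k : 'I_n.+1 -> R,
    \sum_(i < n.+1) k i *: X`_i = 0 & exists i, k i != 0.
  apply: NNPP => nok; move/negP: Xnfree; apply; apply/freeP => k Xk i.
  by apply: NNPP => /eqP ki; apply: nok; exists k => //; exists i.
exists (\poly_(j < n.+1) k (inord j)); split.
  apply: contra ki => /eqP/(congr1 (fun p : {poly R} => p`_i)).
  by rewrite coef_poly ltn_ord inord_val coef0 => ->.
rewrite poly_def (big_morph peval pevalD peval0) -[RHS]Xk.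
by apply: eq_bigr => j _; rewrite pevalZ inord_val nth_mktuple.
Qed.

Section FormallyReal.
Hypothesis Hreal : formally_real mult.

Lemma peval_sqr_factor a b d : b != 0 ->
  peval (d * (('X - a%:P) ^+ 2 + (b ^+ 2)%:P)) = 0 -> peval d = 0.
Proof.
move=> bn0 pd; set y := peval d; set u := peval (('X - a%:P) * d).
have : mult (b *: y) (b *: y) + mult u u = 0.
  rewrite (multZl Halg) (multZr Halg) scalerA -!pevalM -pevalZ -pevalD.
  have -> : b * b *: (d * d) + ('X - a%:P) * d * (('X - a%:P) * d) =
      d * (d * (('X - a%:P) ^+ 2 + (b ^+ 2)%:P)) by rewrite -mul_polyC; ring.
  by rewrite pevalM pd (mult0r Halg).
by move/Hreal/eqP; rewrite scaler_eq0 (negPf bn0) => /eqP.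
Qed.

Lemma peval_root_idempotent a d : w \notin <[e]>%VS ->
  peval (d * ('X - a%:P)) = 0 -> peval d != 0 ->
  exists f, [/\ f \in A, mult f f = f, mult e f = f, f != 0 & f != e].
Proof.
move=> wne pd yn0; set y := peval d; set c := d.[a].
have yy : mult y y = c *: y.
  have /factor_theorem[h hE] : root (d - c%:P) a.
    by rewrite /root hornerD hornerN hornerC subrr.
  apply/eqP; rewrite -subr_eq0 /y -pevalM -pevalZ -pevalB.
  have -> : d * d - c *: d = h * (d * ('X - a%:P)) by rewrite -mul_polyC -mulrBl hE; ring.
  by rewrite pevalM pd (mult0r Halg).
have cn0 : c != 0.
  apply: contra yn0 => /eqP c0; apply/eqP; apply: (formally_real_sq_eq0 Halg Hreal).
  by rewrite yy c0 scale0r.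
have [yA ey] := peval_mem d.
exists (c^-1 *: y); split.
- by rewrite memvZ.
- by rewrite (multZl Halg) (multZr Halg) yy !scalerA divfK.
- by rewrite (multZr Halg) ey.
- by rewrite scaler_eq0 invr_eq0 negb_or cn0.
apply: contra wne => /eqP fe.
have yE : y = c *: e by rewrite -fe scalerA divff // scale1r.
move: pd; rewrite pevalM -/y yE pevalB pevalX pevalC (multZl Halg) (multBr Halg).
rewrite (multZr Halg) ew ee => /eqP.
by rewrite scaler_eq0 (negPf cn0) subr_eq0 => /eqP ->; rewrite memvZ ?memv_line.
Qed.

Lemma exists_proper_subidempotent : w \notin <[e]>%VS ->
  exists f, [/\ f \in A, mult f f = f, mult e f = f, f != 0 & f != e].
Proof.
move=> wne; have [p [[pn0 pp] pmin]] :=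
  ex_min_measure (fun p : {poly R} => size p) peval_annihilator.
have en0 : e != 0 by apply: contraNneq wne => e0; rewrite -ew e0 (mult0l Halg) mem0v.
have sp : size p != 1%N.
  apply/eqP => sp1; have pE := size1_polyC (eq_leq sp1).
  move: pp; rewrite pE pevalC => /eqP; rewrite scaler_eq0 (negPf en0) orbF => /eqP c0.
  by move: pn0; rewrite pE c0 eqxx.
have proper_factor d q : p = d * q -> (1 < size q)%N -> peval d != 0.
  move=> pE sq; have dn0 : d != 0 by apply: contra pn0 => /eqP d0; rewrite pE d0 mul0r.
  by apply/eqP => dd; apply: (pmin d); [rewrite pE size_mul_gt | ].
have [[a /factor_theorem[d pE]] | [a [b [bn0 /dvdpP[d pE]]]]] :=
  real_root_or_quadratic_factor sp.
- apply: (peval_root_idempotent (a := a) (d := d)) => //; first by rewrite -pE.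
  by apply: proper_factor pE _; rewrite size_XsubC.
- have := proper_factor d _ pE; rewrite size_sqr_XsubC_addC => /(_ isT)/negP[].
  by apply/eqP; apply: (peval_sqr_factor (a := a) bn0); rewrite -pE.
Qed.

End FormallyReal.
End PolyEval.

Section Decomposition.
Variable one : V.
Hypotheses (one_id : forall v, mult one v = v) (Hreal : formally_real mult).

Definition idempotent_decomposition (s : seq V) :=
  [&& orth_idempotents mult s, all (fun x => x \in A) s & \sum_(x <- s) x == one].

Lemma decomposition_dim s : idempotent_decomposition s ->
  (forall x w, x \in s -> w \in A -> mult x w \in <[x]>%VS) -> (\dim A <= size s)%N.
Proof.
case/and3P=> _ _ /eqP s1 sx; apply: leq_trans (dim_span s); apply/dimvS/subvP => w wA.
rewrite -[w]one_id -s1 (mult_suml Halg) big_seq; apply: rpred_sum => x xs.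
by have /vlineP[k ->] := sx x w xs wA; rewrite memvZ ?memv_span.
Qed.

Lemma decomposition_split s x f : idempotent_decomposition s -> x \in s ->
  f \in A -> mult f f = f -> mult x f = f -> f != 0 -> f != x ->
  idempotent_decomposition [:: f, x - f & rem x s].
Proof.
case/and3P=> /andP[s_idem s_orth] sA /eqP s1 xs fA ff xf fn0 fx.
have xA := allP sA x xs; have /andP[/eqP xx _] := allP s_idem x xs.
have sym_orth : symmetric (fun u v => mult u v == 0) by move=> u v; rewrite multC.
have /allP x_orth := all_rem_pairwise sym_orth xs s_orth.
have f_orth z : z \in rem x s -> mult f z == 0.
  move=> zs; have zA : z \in A by apply: (allP sA); apply: mem_rem zs.
  by rewrite -xf (multC Halg x) Aassoc // (eqP (x_orth z zs)) (mult0r Halg).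
have xf_orth z : z \in rem x s -> mult (x - f) z == 0.
  by move=> zs; rewrite (multBl Halg) (eqP (f_orth z zs)) subr0 x_orth.
have f_xf : mult f (x - f) = 0 by rewrite (multBr Halg) (multC Halg f) xf ff subrr.
have xf_idem : mult (x - f) (x - f) = x - f.
  by rewrite (multBr Halg) !(multBl Halg) xx xf (multC Halg f) xf ff subrr subr0.
apply/and3P; split.
- rewrite /orth_idempotents /= ff xf_idem f_xf !eqxx fn0 subr_eq0 eq_sym fx /=.
  rewrite (subseq_pairwise (rem_subseq x s) s_orth) !andbT.
  apply/and3P; split; apply/allP => z zs; rewrite ?f_orth ?xf_orth //.
  exact: (allP s_idem) (mem_rem zs).
- by rewrite /= fA rpredB //=; apply/allP => z /mem_rem/(allP sA).
- by rewrite !big_cons addrA [f + _]addrC subrK -s1 (big_rem _ xs).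
Qed.

Lemma decomposition_refine s : idempotent_decomposition s -> (size s < \dim A)%N ->
  exists2 s', idempotent_decomposition s' & size s' = (size s).+1.
Proof.
move=> sdec slt.
have [x [w [xs wA xw]]] : exists x w, [/\ x \in s, w \in A & mult x w \notin <[x]>%VS].
  apply: NNPP => nox; move: slt; rewrite ltnNge => /negP[].
  apply: decomposition_dim => // x w xs wA; apply/negPn/negP => xw.
  by apply: nox; exists x, w.
case/and3P: (sdec) => /andP[s_idem _] sA _.
have xA := allP sA x xs; have /andP[/eqP xx _] := allP s_idem x xs.
have xxw : mult x (mult x w) = mult x w by rewrite -Aassoc ?xx.
have [f [fA ff xf fn0 fx]] :=
  exists_proper_subidempotent xA xx (Asub xA wA) xxw Hreal xw.
exists [:: f, x - f & rem x s]; first exact: decomposition_split.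
have s_gt0 : (0 < size s)%N by case: (s) xs.
by rewrite /= size_rem // prednK.
Qed.

Lemma exists_decomposition n : one \in A -> (0 < n <= \dim A)%N ->
  exists2 s, idempotent_decomposition s & size s = n.
Proof.
move=> oneA /andP[]; elim: n => // -[_ _ dimA | n IH _ dimA].
  exists [:: one] => //; rewrite /idempotent_decomposition /orth_idempotents /=.
  rewrite big_seq1 oneA one_id !eqxx !andbT /=; apply: contraTneq dimA => one0.
  suff /dimvS : (A <= 0)%VS by rewrite dimv0 leqn0 => /eqP ->.
  by apply/subvP => v _; rewrite memv0 -[v]one_id one0 (mult0l Halg).
have [s sdec sn] := IH isT (ltnW dimA).
have [|s' s'dec s'n] := decomposition_refine sdec; first by rewrite sn.
by exists s'; rewrite // s'n sn.
Qed.

End Decomposition.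
End AssociativeSubalgebra.

Section AdjoinUnit.
Variables (R : realType) (V : vectType R) (mult : V -> V -> V) (one : V).
Hypotheses (Halg : comm_algebra mult) (one_id : forall v, mult one v = v).

Lemma mult_add_unitl u a y : mult (u + a *: one) y = mult u y + a *: y.
Proof. by rewrite (multDl Halg) (multZl Halg) one_id. Qed.

Lemma mult_add_unitr y u a : mult y (u + a *: one) = mult y u + a *: y.
Proof. by rewrite (multC Halg) mult_add_unitl (multC Halg). Qed.

Variable W : {vspace V}.

Lemma adjoin_unit_subalgebra :
  is_subalgebra mult W -> is_subalgebra mult (W + <[one]>)%VS.
Proof.
move=> Wsub _ y /memv_addP[u uW [_ /vlineP[a ->] ->]] yA.
have uyW : mult u y \in W.
  move: yA => /memv_addP[v vW [_ /vlineP[b ->] ->]].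
  by rewrite mult_add_unitr memvD ?memvZ ?Wsub.
by rewrite mult_add_unitl memvD ?memvZ // (subvP (addvSl W _)).
Qed.

Lemma adjoin_unit_associative :
  is_associative_on mult W -> is_associative_on mult (W + <[one]>)%VS.
Proof.
move=> Wass.
have assocWW u v z : u \in W -> v \in W -> z \in (W + <[one]>)%VS ->
    mult (mult u v) z = mult u (mult v z).
  move=> uW vW /memv_addP[w wW [_ /vlineP[c ->] ->]].
  by rewrite !mult_add_unitr (multDr Halg) (multZr Halg) Wass.
have assocW u y z : u \in W -> y \in (W + <[one]>)%VS -> z \in (W + <[one]>)%VS ->
    mult (mult u y) z = mult u (mult y z).
  move=> uW /memv_addP[v vW [_ /vlineP[b ->] ->]] zA.
  rewrite mult_add_unitr mult_add_unitl (multDl Halg) (multZl Halg).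
  by rewrite (multDr Halg) (multZr Halg) assocWW.
move=> _ y z /memv_addP[u uW [_ /vlineP[a ->] ->]] yA zA.
by rewrite !mult_add_unitl (multDl Halg) (multZl Halg) assocW.
Qed.

Lemma formally_real_of_inner (ip : V -> V -> R) : pos_inner_product ip ->
  (forall u v w, ip u (mult v w) = ip (mult u v) w) -> formally_real mult.
Proof.
move=> Hip M1; have ipD u v w : ip (u + v) w = ip u w + ip v w.
  by have := ip_linl Hip w 1 u v; rewrite scale1r mul1r.
have ip0 w : ip 0 w = 0 by apply/(addrI (ip 0 w)); rewrite -ipD !addr0.
have ip_sqr u : ip u u = ip (mult u u) one by rewrite -M1 (multC Halg u) one_id.
move=> u v uv; apply/eqP; apply: contraT => un0.
have := ip_pos Hip un0.
have : 0 <= ip v v by have [->|/(ip_pos Hip)/ltW] := eqVneq v 0; rewrite ?ip0.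
have : ip u u + ip v v = 0 by rewrite !ip_sqr -ipD uv ip0.
lra.
Qed.

End AdjoinUnit.

Theorem mainTheorem7 (R : realType) (V : vectType R) (gT : finGroupType)
    (G : {group gT}) (T : {set gT}) (mult : V -> V -> V) (ip : V -> V -> R)
    (phi : gT -> V -> V) (psi : gT -> V) (one : V) :
  majorana_rep G T mult ip phi psi ->
  (forall v, mult one v = v) ->
  axiom_M2' mult ip ->
  (forall x : V, x != 0 -> idempotent_el mult x ->
     (exists s : seq V, forall y, y \in V0 mult x -> idempotent_el mult y -> y \in s)
     /\ (\dim (V0 mult x) <= 2)%N) ->
  forall W : {vspace V}, is_subalgebra mult W -> is_associative_on mult W ->
    (\dim W <= 3)%N.
Proof.
move=> HV one_id _ Hid W Wsub Wass; rewrite leqNgt; apply/negP => dimW.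
have Halg := V_alg HV.
have Hreal := formally_real_of_inner Halg one_id (V_ip HV) (axM1 HV).
have oneA : one \in (W + <[one]>)%VS by rewrite (subvP (addvSr W _)) ?memv_line.
have dimA : (0 < 4 <= \dim (W + <[one]>))%N by rewrite (leq_trans dimW) ?dimvS ?addvSl.
have [[|x t] dec size4] := exists_decomposition Halg
  (adjoin_unit_subalgebra Halg one_id Wsub) (adjoin_unit_associative Halg one_id Wass)
  one_id Hreal oneA dimA => //.
case/and3P: dec => orth _ _; case/andP: (orth) => /andP[/andP[/eqP xx xn0] _] _.
have [_ dimV0] := Hid x xn0 xx.
by have := leq_trans (orth_idempotents_dim_V0 Halg orth) dimV0; case: size4 => ->.
Qed.
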